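(* Let $\mathfrak L=\mathbb V\oplus\mathbb W$ be a color gLt-algebra admitting a quasi-multiplicative basis $\mathfrak B=\{e_i\}_{i\in I}$ of $\mathbb W\neq0$. Suppose $\mathfrak L$ is centerless, i.e. $\mathcal Z(\mathfrak L)=0$, and $\mathbb V$ is tight. Then $\mathfrak L=\bigoplus_{[i]\in I/\sim}\mathfrak J_{[i]}$.
   Context: Let $\mathbb F$ be a field, $\mathbb G$ an abelian group, $n\ge 2$, and $\epsilon:\mathbb G\times\mathbb G\to\mathbb F\setminus\{0\}$ a bicharacter ($\epsilon(k,g+h)=\epsilon(k,g)\epsilon(k,h)$, $\epsilon(g+h,k)=\epsilon(g,k)\epsilon(h,k)$, $\epsilon(g,h)\epsilon(h,g)=1$). A graded $n$-ary algebra is a $\mathbb G$-graded vector space $\mathfrak L=\bigoplus_{g\in\mathbb G}\mathfrak L_g$ with an $n$-linear map $\langle\cdot,\dots,\cdot\rangle:\mathfrak L^n\to\mathfrak L$ such that $\langle\mathfrak L_{g_1},\dots,\mathfrak L_{g_n}\rangle\subset\mathfrak L_{g_1+\dots+g_n}$. For $\sigma\in\mathbb S_n$ write $\langle x_1,\dots,x_n\rangle_\sigma:=\langle x_{\sigma(1)},\dots,x_{\sigma(n)}\rangle$; for subsets $A_1,\dots,A_n$, $\langle A_1,\dots,A_n\rangle_\sigma$ denotes the linear span of all $\langle x_1,\dots,x_n\rangle_\sigma$ with $x_r\in A_r$. A color gLt-algebra is a graded $n$-ary algebra satisfying, for each $k=1,\dots,n$ and fixed scalars $\alpha^{\sigma_1,\sigma_2}_{i,j,k}\in\mathbb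 F$, the color version (each term on the right multiplied by the product of values of $\epsilon$ on the degrees of the homogeneous arguments transposed in passing from the left-hand order to the order of that term) of the identity $\langle y_1,\dots,y_{k-1},\langle x_1,\dots,x_n\rangle,y_k,\dots,y_{n-1}\rangle=\sum_{1\le i,j\le n,\,\sigma_1\in\mathbb S_n,\,\sigma_2\in\mathbb S_{n-1}}\alpha^{\sigma_1,\sigma_2}_{i,j,k}\langle x_{\sigma_1(1)},\dots,x_{\sigma_1(i-1)},\langle y_{\sigma_2(1)},\dots,y_{\sigma_2(j-1)},x_{\sigma_1(i)},y_{\sigma_2(j)},\dots,y_{\sigma_2(n-1)}\rangle,x_{\sigma_1(i+1)},\dots,x_{\sigma_1(n)}\rangle$. The center is $\mathcal Z(\mathfrak L):=\{x\in\mathfrak L:\langle x,\mathfrak L,\dots,\mathfrak L\rangle_\sigma=0\text{ for all }\sigma\in\mathbb S_n\}$. $\mathfrak L$ admits a quasi-multiplicative basis if $\mathfrak L=\mathbb V\oplus\mathbb W$ with $\mathbb V$, $\mathbb W\ne0$ graded subspaces and $\mathfrak B=\{e_i\}_{i\in I}$ a basis of homogeneous elements of $\mathbb W$ such that: (1) for $i_1,\dots,i_n\in I$, either $\langle e_{i_1},\dots,e_{i_n}\rangle\in\mathbb Fe_j$ for some $j\in I$ or $\langle e_{i_1},\dots,e_{i_n}\rangle\in\mathbb V$; (2) for $0<k<n$, $i_1,\dots,i_k\in I$ and $\sigma\in\mathbb S_n$, $\langle e_{i_1},\dots,e_{i_k},\mathbb V,\dots,\mathbb V\rangle_\sigma\subset\mathbb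 Fe_{j_\sigma}$ for some $j_\sigma\in I$; (3) either $\langle\mathbb V,\dots,\mathbb V\rangle\subset\mathbb Fe_j$ for some $j\in I$ or $\langle\mathbb V,\dots,\mathbb V\rangle\subset\mathbb V$. Index maps: let $v$ be a symbol not in $I$, $\mathfrak I:=I\,\dot\cup\,\{v\}$; for each $j\in\mathfrak I$ take a new symbol $\overline j$, $\overline I:=\{\overline i:i\in I\}$, $\overline{\mathfrak I}:=\overline I\,\dot\cup\,\{\overline v\}$; set $\overline{(\overline j)}:=j$, $\overline J:=\{\overline j:j\in J\}$ for a set $J$ of symbols ($\overline\emptyset=\emptyset$). Put $u_j:=e_j$ for $j\in I$ and $u_v:=\mathbb V$. For $\sigma\in\mathbb S_n$ and $(j_1,\dots,j_n)\in\mathfrak I^n$ let $a_\sigma(j_1,\dots,j_n)=\{r\}$ if $r\in I$ and $0\ne\langle u_{j_1},\dots,u_{j_n}\rangle_\sigma\subset\mathbb Fe_r$, $=\{v\}$ if $0\ne\langle u_{j_1},\dots,u_{j_n}\rangle_\sigma\subset\mathbb V$, and $=\emptyset$ otherwise. For $j,j_2,\dots,j_n\in\mathfrak I$ let $b_\sigma(j,\overline j_2,\dots,\overline j_n):=\{x\in\mathfrak I: a_\sigma(x,j_2,\dots,j_n)=\{j\}\}$. Define $\mu$ on $(\mathfrak I\,\dot\cup\,\overline{\mathfrak I})\times(\mathfrak I^{n-1}\,\dot\cup\,\overline{\mathfrak I}^{n-1})$ with values subsets of $\mathfrak I$ by: $\mu(j,j_1,\dots,j_{n-1})=\bigcup_{\sigma\in\mathbb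 S_n}a_\sigma(j,j_1,\dots,j_{n-1})$ for $j,j_1,\dots,j_{n-1}\in\mathfrak I$; $\mu(j,\overline j_1,\dots,\overline j_{n-1})=\bigcup_{\sigma\in\mathbb S_n}b_\sigma(j,\overline j_1,\dots,\overline j_{n-1})$ for $j,j_1,\dots,j_{n-1}\in\mathfrak I$; $\mu(\overline j,j_1,\dots,j_{n-1})=\bigcup_{1\le k\le n-1,\ \sigma\in\mathbb S_n}b_\sigma(j_k,\overline j,\overline j_1,\dots,\overline j_{k-1},\overline j_{k+1},\dots,\overline j_{n-1})$ for $j,j_1,\dots,j_{n-1}\in\mathfrak I$; and $\mu(\overline j,\overline j_1,\dots,\overline j_{n-1})=\emptyset$. Define $\phi$ on pairs $(J,X)$ with $J\subset I\,\dot\cup\,\overline I$ and $X\in\mathfrak I^{n-1}\,\dot\cup\,\overline{\mathfrak I}^{n-1}$ by $\phi(\emptyset,X)=\emptyset$ and, for $J\ne\emptyset$, $\phi(J,X):=K\cup\overline K$ where $K:=\big(\bigcup_{j\in J}\mu(j,X)\big)\setminus\{v\}$. $\mathbb V$ is tight if $\mathbb V=\{0\}$ or $\mathbb V=\sum\{\mathbb F\langle e_{i_1},\dots,e_{i_n}\rangle: i_1,\dots,i_n\in I,\ \mu(i_1,\dots,i_n)=\{v\}\}$. Connections: for distinct $i,j\in I$, $i$ is connected to $j$ if there exist $t\ge1$, $X_1,\dots,X_t\in\mathfrak I^{n-1}\,\dot\cup\,\overline{\mathfrak I}^{n-1}$ and $\widetilde i\in\{i,\overline i\}$ such that $\phi(\{\widetilde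 i\},X_1)\ne\emptyset$, …, $\phi(\cdots\phi(\{\widetilde i\},X_1)\cdots,X_{t-1})\ne\emptyset$, and $j\in\phi(\cdots\phi(\phi(\{\widetilde i\},X_1),X_2)\cdots,X_t)$; every $i$ is connected to itself. Being connected is an equivalence relation $\sim$ on $I$; $[i]$ denotes the class of $i$. Define $\mathbb V_{[i]}:=\big(\sum_{i_1,\dots,i_n\in[i]}\mathbb F\langle e_{i_1},\dots,e_{i_n}\rangle\big)\cap\mathbb V$, $\mathbb W_{[i]}:=\bigoplus_{j\in[i]}\mathbb Fe_j$, and $\mathfrak J_{[i]}:=\mathbb V_{[i]}\oplus\mathbb W_{[i]}$. *)

From HB Require Import structures.
From mathcomp Require Import all_boot all_order all_algebra all_fingroup.
From Stdlib Require List.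
Set Implicit Arguments. Unset Strict Implicit. Unset Printing Implicit Defensive.
Import GRing.Theory.
Local Open Scope ring_scope.

Definition subspace {F : fieldType} {L : lmodType F} (S : L -> Prop) : Prop :=
  S 0 /\ forall (a : F) (x y : L), S x -> S y -> S (a *: x + y).

Definition subset_of {T : Type} (P Q : T -> Prop) : Prop := forall z, P z -> Q z.

Definition span_of {F : fieldType} {L : lmodType F} (P : L -> Prop) : L -> Prop :=
  fun x => exists s : seq (F * L),
    (forall p, List.In p s -> P p.2) /\ x = \sum_(p <- s) p.1 *: p.2.

Definition line {F : fieldType} {L : lmodType F} (v : L) : L -> Prop :=
  fun z => exists c : F, z = c *: v.

Definition nonzero {F : fieldType} {L : lmodType F} (S : L -> Prop) : Prop :=
  exists z, S z /\ z <> 0.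

Definition sum_of {F : fieldType} {L : lmodType F} {T : Type}
    (P : T -> Prop) (A : T -> L -> Prop) (x : L) : Prop :=
  exists (s : seq T) (f : T -> L), List.NoDup s /\
    (forall t, List.In t s -> P t /\ A t (f t)) /\ x = \sum_(t <- s) f t.

Definition independent {F : fieldType} {L : lmodType F} {T : Type}
    (P : T -> Prop) (A : T -> L -> Prop) : Prop :=
  forall (s : seq T) (f : T -> L), List.NoDup s ->
    (forall t, List.In t s -> P t /\ A t (f t)) ->
    \sum_(t <- s) f t = 0 -> forall t, List.In t s -> f t = 0.

Definition is_direct_sum {F : fieldType} {L : lmodType F} {T : Type}
    (X : L -> Prop) (P : T -> Prop) (A : T -> L -> Prop) : Prop :=
  (forall t, P t -> subspace (A t)) /\
  (forall x, X x <-> sum_of P A x) /\ independent P A.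

Definition ins {T : Type} {n : nat} (p : 'I_n) (z : T) (f : 'I_n.-1 -> T) : 'I_n -> T :=
  fun m => match unlift p m with None => z | Some q => f q end.

Definition tcons {T : Type} {m : nat} (z : T) (f : 'I_m.-1 -> T) : 'I_m -> T :=
  fun i => match nat_of_ord i with
           | 0 => z
           | k.+1 => match (insub k : option 'I_m.-1) with Some k' => f k' | None => z end
           end.

Definition bicharacter {F : fieldType} {G : zmodType} (eps : G -> G -> F) : Prop :=
  (forall g h, eps g h != 0) /\
  (forall k g h, eps k (g + h) = eps k g * eps k h) /\
  (forall k g h, eps (g + h) k = eps g k * eps h k) /\
  (forall g h, eps g h * eps h g = 1).

Definition multilinear {F : fieldType} {L : lmodType F} {n : nat}
    (br : ('I_n -> L) -> L) : Prop :=
  forall (f : 'I_n -> L) (r : 'I_n) (a : F) (u v : L),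
    br (fun m => if m == r then a *: u + v else f m) =
    a *: br (fun m => if m == r then u else f m) + br (fun m => if m == r then v else f m).

Definition graded_nary_algebra {F : fieldType} {G : zmodType} {L : lmodType F} {n : nat}
    (Lg : G -> L -> Prop) (br : ('I_n -> L) -> L) : Prop :=
  is_direct_sum (fun _ => True) (fun _ => True) Lg /\ multilinear br /\
  forall (g : 'I_n -> G) (x : 'I_n -> L),
    (forall r, Lg (g r) (x r)) -> Lg (\sum_(r < n) g r) (br x).

(* color factor: product of eps(deg a, deg b) over all pairs (a,b) with a
   before b in l1 and b before a in l2 (the pairs transposed) *)
Definition color_factor {F : fieldType} {G : zmodType} {T : eqType}
    (eps : G -> G -> F) (deg : T -> G) (l1 l2 : seq T) : F :=
  \prod_(a <- l1) \prod_(b <- l1 | ((index a l1 < index b l1) && (index b l2 < index a l2))%N)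
     eps (deg a) (deg b).

(* labels: inl r stands for x_{r}, inr s for y_{s} *)
Definition label_deg {G : zmodType} {n : nat} (g : 'I_n -> G) (h : 'I_n.-1 -> G)
    (l : 'I_n + 'I_n.-1) : G :=
  match l with inl r => g r | inr s => h s end.

(* order of the arguments in  <y_1,..,y_{k-1},<x_1,..,x_n>,y_k,..,y_{n-1}>  *)
Definition lhs_labels {n : nat} (k : 'I_n) : seq ('I_n + 'I_n.-1) :=
  flatten [seq match unlift k m with
               | None => [seq inl r | r <- enum 'I_n]
               | Some q => [:: inr q] end | m <- enum 'I_n].

(* order of the arguments in
  <x_{s1(1)},..,x_{s1(i-1)},<y_{s2(1)},..,y_{s2(j-1)},x_{s1(i)},y_{s2(j)},..>,x_{s1(i+1)},..> *)
Definition rhs_labels {n : nat} (s1 : {perm 'I_n}) (s2 : {perm 'I_n.-1}) (i j : 'I_n)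
    : seq ('I_n + 'I_n.-1) :=
  flatten [seq if m == i then
                 flatten [seq match unlift j m2 with
                              | None => [:: inl (s1 i)]
                              | Some q => [:: inr (s2 q)] end | m2 <- enum 'I_n]
               else [:: inl (s1 m)] | m <- enum 'I_n].

(* indices are 0-based: i, j, k : 'I_n stand for i-1, j-1, k-1 of the paper *)
Definition color_gLt {F : fieldType} {G : zmodType} {L : lmodType F} {n : nat}
    (eps : G -> G -> F) (Lg : G -> L -> Prop) (br : ('I_n -> L) -> L)
    (alpha : {perm 'I_n} -> {perm 'I_n.-1} -> 'I_n -> 'I_n -> 'I_n -> F) : Prop :=
  forall (k : 'I_n) (g : 'I_n -> G) (h : 'I_n.-1 -> G) (x : 'I_n -> L) (y : 'I_n.-1 -> L),
    (forall r, Lg (g r) (x r)) -> (forall s, Lg (h s) (y s)) ->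
    br (ins k (br x) y) =
    \sum_(i < n) \sum_(j < n) \sum_(s1 : {perm 'I_n}) \sum_(s2 : {perm 'I_n.-1})
      (alpha s1 s2 i j k *
       color_factor eps (label_deg g h) (lhs_labels k) (rhs_labels s1 s2 i j)) *:
      br (fun m => if m == i then br (ins j (x (s1 i)) (fun q => y (s2 q)))
                   else x (s1 m)).

Definition bracket_set {F : fieldType} {L : lmodType F} {n : nat}
    (br : ('I_n -> L) -> L) (A : 'I_n -> L -> Prop) (s : {perm 'I_n}) : L -> Prop :=
  span_of (fun z => exists x : 'I_n -> L, (forall r, A r (x r)) /\ z = br (fun m => x (s m))).

Definition center {F : fieldType} {L : lmodType F} {n : nat}
    (br : ('I_n -> L) -> L) : L -> Prop :=
  fun x => forall s : {perm 'I_n},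
    subset_of (bracket_set br (tcons (fun z => z = x) (fun _ _ => True)) s) (fun z => z = 0).

Definition centerless {F : fieldType} {L : lmodType F} {n : nat}
    (br : ('I_n -> L) -> L) : Prop :=
  forall x, center br x -> x = 0.

Definition graded_subspace {F : fieldType} {G : zmodType} {L : lmodType F}
    (Lg : G -> L -> Prop) (S : L -> Prop) : Prop :=
  subspace S /\ forall x, S x -> sum_of (fun _ => True) (fun g z => Lg g z /\ S z) x.

Definition quasi_multiplicative_basis {F : fieldType} {G : zmodType} {L : lmodType F}
    {n : nat} {I : Type}
    (Lg : G -> L -> Prop) (br : ('I_n -> L) -> L) (V W : L -> Prop) (e : I -> L) : Prop :=
  graded_subspace Lg V /\ graded_subspace Lg W /\
  (forall x, V x -> W x -> x = 0) /\ (forall x, exists v w, V v /\ W w /\ x = v + w) /\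
  nonzero W /\
  (forall x, W x <-> span_of (fun z => exists i, z = e i) x) /\
  (forall (s : seq I) (c : I -> F), List.NoDup s ->
      \sum_(i <- s) c i *: e i = 0 -> forall i, List.In i s -> c i = 0) /\
  (forall i, exists g, Lg g (e i)) /\
  (forall t : 'I_n -> I,
      (exists j, line (e j) (br (fun m => e (t m)))) \/ V (br (fun m => e (t m)))) /\
  (forall (k : nat) (t : 'I_n -> I) (s : {perm 'I_n}), (0 < k < n)%N ->
      exists j, subset_of
        (bracket_set br (fun r : 'I_n => if (r < k)%N then (fun z => z = e (t r)) else V) s)
        (line (e j))) /\
  ((exists j, subset_of (bracket_set br (fun _ => V) 1%g) (line (e j))) \/
   subset_of (bracket_set br (fun _ => V) 1%g) V).

(* Index maps.  The symbol v is None : option I ; a barred symbol is    *)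
(* tagged with true, an unbarred one with false.                        *)

Section IndexMaps.
Context {F : fieldType} {L : lmodType F} {n : nat} {I : Type}.
Variables (br : ('I_n -> L) -> L) (V : L -> Prop) (e : I -> L).

Definition u_of (j : option I) : L -> Prop :=
  match j with Some i => (fun z => z = e i) | None => V end.

Definition a_map (s : {perm 'I_n}) (jj : 'I_n -> option I) : option I -> Prop :=
  fun y => nonzero (bracket_set br (fun m => u_of (jj m)) s) /\
           subset_of (bracket_set br (fun m => u_of (jj m)) s)
                     (match y with Some r => line (e r) | None => V end).

Definition b_map (s : {perm 'I_n}) (j : option I) (rest : 'I_n.-1 -> option I)
    : option I -> Prop :=
  fun x => forall y, a_map s (tcons x rest) y <-> y = j.

Definition mu (jb : option I * bool) (Xb : ('I_n.-1 -> option I) * bool) : option I -> Prop :=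
  match jb, Xb with
  | (j, false), (X, false) => fun y => exists s, a_map s (tcons j X) y
  | (j, false), (X, true) => fun y => exists s, b_map s j X y
  | (j, true), (X, false) =>
      fun y => exists (k : 'I_n.-1) s, b_map s (X k) (tcons j (fun q => X (lift k q))) y
  | (_, true), (_, true) => fun _ => False
  end.

Definition phi (J : I * bool -> Prop) (Xb : ('I_n.-1 -> option I) * bool) : I * bool -> Prop :=
  fun p => exists j, J j /\ mu (Some j.1, j.2) Xb (Some p.1).

Definition phi_iter (J : I * bool -> Prop) (Xs : seq (('I_n.-1 -> option I) * bool))
    : I * bool -> Prop := foldl phi J Xs.

Definition connected (i j : I) : Prop :=
  i = j \/
  exists (b : bool) (Xs : seq (('I_n.-1 -> option I) * bool)),
    (0 < size Xs)%N /\
    (forall m, (0 < m < size Xs)%N ->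
       exists p, phi_iter (fun q => q = (i, b)) (take m Xs) p) /\
    phi_iter (fun q => q = (i, b)) Xs (j, false).

Definition cls (i : I) : I -> Prop := fun j => connected i j.

Definition tight : Prop :=
  (forall x, V x -> x = 0) \/
  (forall x, V x <-> span_of (fun z => exists (i1 : I) (rest : 'I_n.-1 -> I),
        (forall y, mu (Some i1, false) (fun q => Some (rest q), false) y <-> y = None) /\
        z = br (tcons (e i1) (fun q => e (rest q)))) x).

Definition V_cls (C : I -> Prop) : L -> Prop :=
  fun x => V x /\ span_of (fun z => exists t : 'I_n -> I,
                             (forall r, C (t r)) /\ z = br (fun m => e (t m))) x.

Definition W_cls (C : I -> Prop) : L -> Prop :=
  span_of (fun z => exists j, C j /\ z = e j).

Definition J_cls (C : I -> Prop) : L -> Prop :=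
  fun x => exists v w, V_cls C v /\ W_cls C w /\ x = v + w.

End IndexMaps.

(* Connection is the equivalence relation generated by single steps of mu, and a
   nonzero bracket of basis vectors has all its indices in one class: it lies either in
   a line F e_r, and then mu links every index to r, or in V, and then mu links the
   indices to each other.  The color gLt identity rewrites a bracket with a nested bracket
   of basis vectors as argument into a combination of brackets with one nested argument
   less, carrying arguments of the same classes; so by induction a bracket of basis
   vectors and brackets of basis vectors whose classes are not all equal vanishes.
   Tightness makes V spanned by brackets of basis vectors of a single class, hence L is
   the sum of the J_[i].  In a vanishing sum of elements of distinct J_[i], the
   W-components vanish by linear independence of the basis, and each V-component is
   central (a bracket with it vanishes, either by the previous step or after replacing
   it by minus the other V-components), hence zero by centerlessness. *)

From Pilot Require Import Defs.
From HB Require Import structures.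
From mathcomp Require Import all_boot all_order all_algebra all_fingroup.
From mathcomp Require Import boolp.
From Stdlib Require Import Relations.
Set Implicit Arguments. Unset Strict Implicit. Unset Printing Implicit Defensive.
Import GRing.Theory.
Local Open Scope ring_scope.

Lemma InP (T : eqType) (x : T) (s : seq T) : reflect (List.In x s) (x \in s).
Proof.
elim: s => [|y s IH] /=; first by constructor.
rewrite inE; apply: (iffP orP) => [[/eqP->|/IH]|[->|/IH]]; by [left|right].
Qed.

Lemma NoDupP (T : eqType) (s : seq T) : reflect (List.NoDup s) (uniq s).
Proof.
elim: s => [|x s IH] /=; first by do 2!constructor.
apply: (iffP andP) => [[/InP xNs /IH]|ND]; first by constructor.
by inversion ND; split; [apply/InP|apply/IH].
Qed.

Section Span.
Context {F : fieldType} {L : lmodType F}.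
Implicit Types (P S : L -> Prop) (x y : L).

Lemma subspace0 S : subspace S -> S 0.
Proof. by case. Qed.

Lemma subspaceD S x y : subspace S -> S x -> S y -> S (x + y).
Proof. by move=> [_ SS] Sx Sy; rewrite -[x]scale1r; apply: SS. Qed.

Lemma subspaceZ S a x : subspace S -> S x -> S (a *: x).
Proof. by move=> [S0 SS] Sx; rewrite -[_ *: _]addr0; apply: SS. Qed.

Lemma subspaceN S x : subspace S -> S x -> S (- x).
Proof. by move=> SS Sx; rewrite -scaleN1r; apply: subspaceZ. Qed.

Lemma subspace_sum S (T : Type) (s : seq T) (f : T -> L) :
  subspace S -> (forall t, List.In t s -> S (f t)) -> S (\sum_(t <- s) f t).
Proof.
move=> SS; elim: s => [|a s IH] Sf; first by rewrite big_nil; apply: subspace0.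
rewrite big_cons; apply: subspaceD => //; first by apply: Sf; left.
by apply: IH => t Ht; apply: Sf; right.
Qed.

Lemma line_subspace (v : L) : subspace (line v).
Proof.
split; first by exists 0; rewrite scale0r.
by move=> a x y [c ->] [d ->]; exists (a * c + d); rewrite scalerDl scalerA.
Qed.

Lemma span_of_ind P (Q : L -> Prop) :
  Q 0 -> (forall a u v, P u -> Q v -> Q (a *: u + v)) ->
  forall x, span_of P x -> Q x.
Proof.
move=> Q0 QS x [s [Ps ->]]; elim: s Ps => [|p s IH] Ps; first by rewrite big_nil.
by rewrite big_cons; apply: QS; [apply: Ps; left | apply: IH => q Hq; apply: Ps; right].
Qed.

Lemma span_of_gen P x : P x -> span_of P x.
Proof.
move=> Px; exists [:: (1, x)]; split; first by move=> p [<-|[]].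
by rewrite big_seq1 scale1r.
Qed.

Lemma span_of0 P : span_of P 0.
Proof. by exists [::]; rewrite big_nil. Qed.

Lemma span_ofDZ P a x y : span_of P x -> span_of P y -> span_of P (a *: x + y).
Proof.
move=> [s [Ps ->]] [s' [Ps' ->]].
exists ([seq (a * p.1, p.2) | p <- s] ++ s'); split.
  move=> p /(@List.in_app_or _ _ _ _) [|/Ps' //].
  by case/(@List.in_map_iff _ _ _ _ _) => q [<- /Ps].
rewrite big_cat big_map scaler_sumr; congr (_ + _).
by apply: eq_bigr => p _; rewrite scalerA.
Qed.

Lemma span_of_subspace P : subspace (span_of P).
Proof. by split; [apply: span_of0 | move=> a x y; apply: span_ofDZ]. Qed.

Lemma span_of_min P S : subspace S -> subset_of P S -> subset_of (span_of P) S.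
Proof. by move=> [S0 SS] PS; apply: span_of_ind => // a u v /PS; apply: SS. Qed.

Lemma span_of_mono P S : subset_of P S -> subset_of (span_of P) (span_of S).
Proof. by move=> PS; apply: span_of_min (@span_of_subspace S) _ => x /PS /span_of_gen. Qed.

Lemma sum_of_add (T : eqType) (P : T -> Prop) (A : T -> L -> Prop) x C y :
  (forall t, P t -> subspace (A t)) -> sum_of P A x -> P C -> A C y -> sum_of P A (x + y).
Proof.
move=> AS [s [f [/NoDupP Us [Af ->]]]] PC ACy.
have [Cs|Cns] := boolP (C \in s).
  exists s, (fun t => if t == C then f t + y else f t); split; first exact/NoDupP.
  split=> [t ts|].
    have [Pt Aft] := Af t ts; split=> //; case: eqP => [tC|_] //.
    by subst t; apply: subspaceD => //; apply: AS.
  rewrite !(bigD1_seq C) //= eqxx addrAC; congr (_ + _).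
  by apply: eq_bigr => t /negbTE ->.
exists (C :: s), (fun t => if t == C then y else f t).
split; first by apply/NoDupP => /=; rewrite Cns.
split=> [t [<-|ts]|]; first by rewrite eqxx.
  have tC : t != C by apply: contraNneq Cns => <-; apply/InP.
  by rewrite (negbTE tC); apply: Af.
rewrite big_cons eqxx addrC; congr (_ + _); apply: eq_big_seq => t ts.
by case: eqP ts => // ->; rewrite (negbTE Cns).
Qed.

Lemma sum_of_span (T : eqType) (P : T -> Prop) (A : T -> L -> Prop) Q :
  (forall t, P t -> subspace (A t)) -> (forall y, Q y -> exists2 C, P C & A C y) ->
  subset_of (span_of Q) (sum_of P A).
Proof.
move=> AS QA; apply: span_of_ind.
  by exists [::], (fun _ => 0); rewrite big_nil; split; [constructor | split=> // t []].
move=> a u v /QA [C PC ACu] Hv; rewrite addrC.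
by apply: (sum_of_add AS Hv PC); apply: subspaceZ => //; apply: AS.
Qed.

Lemma sum_of_disjoint_eq0 (T : eqType) (P : T -> Prop) (A : T -> L -> Prop) x :
  (forall t, subspace (A t)) -> independent (fun _ => True) A ->
  sum_of P A x -> sum_of (fun t => ~ P t) A x -> x = 0.
Proof.
move=> AS Aind [s1 [f1 [/NoDupP U1 [A1 E1]]]] [s2 [f2 [/NoDupP U2 [A2 E2]]]].
have {}A1 t : t \in s1 -> P t /\ A t (f1 t) by move/InP/A1.
have {}A2 t : t \in s2 -> ~ P t /\ A t (f2 t) by move/InP/A2.
have s2Ns1 t : t \in s2 -> t \notin s1.
  by move=> t2; apply/negP => t1; have [[]] := A2 t t2; have [] := A1 t t1.
pose g t := if t \in s1 then f1 t else - f2 t.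
have g0 : forall t, List.In t (s1 ++ s2) -> g t = 0.
  apply: Aind.
  - by apply/NoDupP; rewrite cat_uniq U1 U2 andbT; apply/hasPn => t /s2Ns1.
  - move=> t /InP; rewrite mem_cat /g => /orP[t1|t2]; first by rewrite t1; case: (A1 t t1).
    rewrite (negbTE (s2Ns1 t t2)); split=> //.
    by apply: subspaceN => //; case: (A2 t t2).
  - rewrite big_cat /= (eq_big_seq f1) => [|t t1]; last by rewrite /g t1.
    rewrite [X in _ + X](eq_big_seq (fun t => - f2 t)) => [|t t2].
      by rewrite sumrN -E1 -E2 subrr.
    by rewrite /g (negbTE (s2Ns1 t t2)).
rewrite E1 big_seq big1 // => t t1.
by rewrite -(g0 t); [rewrite /g t1 | apply/InP; rewrite mem_cat t1].
Qed.

End Span.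

Section Tuples.
Variable T : Type.

Lemma tcons0 m (z : T) (f : 'I_m -> T) : tcons (m := m.+1) z f ord0 = z.
Proof. by []. Qed.

Lemma tconsS m (z : T) (f : 'I_m -> T) q : tcons (m := m.+1) z f (lift ord0 q) = f q.
Proof.
rewrite /tcons lift0 /= (insubT (fun k => (k < m)%N) (ltn_ord q)) /=.
by congr f; apply: val_inj.
Qed.

Lemma tcons_eta m (g : 'I_m.+1 -> T) i :
  tcons (m := m.+1) (g ord0) (fun q => g (lift ord0 q)) i = g i.
Proof. by case: (unliftP ord0 i) => [q ->|->]; rewrite ?tconsS ?tcons0. Qed.

Lemma ins_at m (p : 'I_m) (z : T) f : ins p z f p = z.
Proof. by rewrite /ins unlift_none. Qed.

Lemma ins_lift m (p : 'I_m) (z : T) f q : ins p z f (lift p q) = f q.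
Proof. by rewrite /ins liftK. Qed.

Lemma ins_eta m (p : 'I_m) (g : 'I_m -> T) : ins p (g p) (fun q => g (lift p q)) = g.
Proof. by apply: funext => i; case: (unliftP p i) => [q ->|->]; rewrite ?ins_lift ?ins_at. Qed.

Definition set_arg m (f : 'I_m -> T) (r : 'I_m) (u : T) : 'I_m -> T :=
  fun i => if i == r then u else f i.

Lemma set_arg_id m (f : 'I_m -> T) r : set_arg f r (f r) = f.
Proof. by apply: funext => i; rewrite /set_arg; case: eqP => // ->. Qed.

End Tuples.

Lemma tcons_comp (T U : Type) (f : T -> U) m (a : T) (g : 'I_m -> T) :
  tcons (m := m.+1) (f a) (fun q => f (g q)) = (fun i => f (tcons (m := m.+1) a g i)).
Proof. by apply: funext => i; case: (unliftP ord0 i) => [q ->|->]; rewrite ?tconsS. Qed.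

Lemma ins_inj (T : eqType) m (p : 'I_m) (z : T) (f : 'I_m.-1 -> T) :
  injective f -> (forall q, f q != z) -> injective (ins p z f).
Proof.
move=> f_inj fNz i j.
case: (unliftP p i) => [qi ->|->]; case: (unliftP p j) => [qj ->|->];
  rewrite ?ins_lift ?ins_at //.
- by move/f_inj->.
- by move/eqP; rewrite (negbTE (fNz _)).
- by move/esym/eqP; rewrite (negbTE (fNz _)).
Qed.

Section QuasiMultiplicativeBasis.
Variables (F : fieldType) (L : lmodType F) (n' : nat) (I : Type).
Local Notation n := n'.+2.
HB.instance Definition _ := gen_eqMixin I.
Variables (br : ('I_n -> L) -> L) (V W : L -> Prop) (e : I -> L).
Hypothesis br_multilinear : multilinear br.
Hypothesis V_subspace : subspace V.
Hypothesis W_spanE : forall x, W x <-> span_of (fun z => exists i, z = e i) x.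
Hypothesis e_free : forall (s : seq I) (c : I -> F), List.NoDup s ->
  \sum_(i <- s) c i *: e i = 0 -> forall i, List.In i s -> c i = 0.
Hypothesis VW_disjoint : forall x, V x -> W x -> x = 0.
Hypothesis br_basis_line_or_V : forall t : 'I_n -> I,
  (exists j, line (e j) (br (fun m => e (t m)))) \/ V (br (fun m => e (t m))).

Local Notation a_map := (a_map br V e).
Local Notation connected := (connected br V e).
Local Notation cls := (cls br V e).

Lemma br_set_arg0 f r : br (set_arg f r 0) = 0.
Proof.
have := br_multilinear f r 1 0 0; rewrite !scale1r addr0 -{1}[br _]addr0.
by move/addrI.
Qed.

Lemma br_kernel_subspace f r : subspace (fun u => br (set_arg f r u) = 0).
Proof.
split=> [|a u v Hu Hv]; first exact: br_set_arg0.
by rewrite [LHS]br_multilinear Hu Hv scaler0 addr0.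
Qed.

Lemma br_eq0_span_args (P A : L -> Prop) (p : 'I_n) :
  (forall x, span_of P x) ->
  (forall z, A (z p) -> (forall r, r != p -> P (z r)) -> br z = 0) ->
  forall z, A (z p) -> br z = 0.
Proof.
move=> spanP brP.
suff brk k : forall z, A (z p) -> (forall r, r != p -> (k <= r)%N -> P (z r)) -> br z = 0.
  by move=> z Az; apply: (brk n) => // r _; rewrite leqNgt ltn_ord.
elim: k => [|k IH] z Az zP; first by apply: brP => // r /zP; apply.
have [kn|nk] := ltnP k n; last by apply: IH => // r _ /(leq_trans nk); rewrite leqNgt ltn_ord.
pose rk := Ordinal kn; have [rkp|rkNp] := eqVneq rk p.
  apply: IH => // r rp; rewrite leq_eqVlt => /orP[/eqP kr|]; last exact: zP.
  by move: rp; rewrite -rkp; case/eqP; apply: val_inj.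
rewrite -(set_arg_id z rk); apply: span_of_min (br_kernel_subspace z rk) _ _ (spanP _) => u Pu.
apply: IH => [|r rp kr]; first by rewrite /set_arg eq_sym (negbTE rkNp).
rewrite /set_arg; case: eqP => // /eqP rrk; apply: zP => //.
by rewrite ltn_neqAle kr andbT; apply: contra rrk => /eqP kr'; apply/eqP/val_inj.
Qed.

Lemma e_lines_independent : independent (fun _ : I => True) (fun j => line (e j)).
Proof.
move=> s f ND fs sf0.
have /choice[c Hc] : forall t, exists c, List.In t s -> f t = c *: e t.
  move=> t; have [Ht|Hnt] := pselect (List.In t s); last by exists 0 => /Hnt.
  by have [_ [c Hc]] := fs t Ht; exists c.
have csum : \sum_(t <- s) c t *: e t = 0.
  by rewrite -[RHS]sf0; apply: eq_big_seq => t /InP/Hc ->.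
by move=> t Ht; rewrite Hc // (e_free ND csum Ht) scale0r.
Qed.

Lemma scale_e_inj c1 c2 r1 r2 : c1 *: e r1 = c2 *: e r2 -> c1 *: e r1 != 0 -> r1 = r2.
Proof.
move=> E; apply: contraNeq => r12.
pose f t := if t == r1 then c1 *: e r1 else - (c2 *: e r2).
have ND : List.NoDup [:: r1; r2] by apply/NoDupP; rewrite /= inE r12.
have lines : forall t, List.In t [:: r1; r2] -> True /\ line (e t) (f t).
  move=> t [<-|[<-|[]]]; split=> //; first by rewrite /f eqxx; exists c1.
  by rewrite /f eq_sym (negbTE r12); exists (- c2); rewrite scaleNr.
have fsum : \sum_(t <- [:: r1; r2]) f t = 0.
  by rewrite big_cons big_seq1 /f eqxx eq_sym (negbTE r12) E subrr.
by have := e_lines_independent ND lines fsum (or_introl erefl); rewrite /f eqxx => ->.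
Qed.

Lemma bracket_set_perm (A : 'I_n -> L -> Prop) (tau s : {perm 'I_n}) :
  bracket_set br (fun m => A (tau m)) s = bracket_set br A (s * tau)%g.
Proof.
rewrite /bracket_set; congr span_of; apply: funext => z; apply: propext; split.
  move=> [x [Ax ->]]; exists (fun r => x (tau^-1 r)%g); split.
    by move=> r; have := Ax (tau^-1 r)%g; rewrite permKV.
  by congr br; apply: funext => m; rewrite permM permK.
move=> [x [Ax ->]]; exists (fun r => x (tau r)); split=> //.
by congr br; apply: funext => m; rewrite permM.
Qed.

Lemma a_map_perm s (tau : {perm 'I_n}) jj jj' y :
  (forall m, jj' m = jj (tau m)) -> a_map (s * tau^-1)%g jj' y <-> a_map s jj y.
Proof.
move=> jjE; have -> : jj' = (fun m => jj (tau m)) by apply: funext.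
by rewrite /Defs.a_map (bracket_set_perm (fun m => u_of V e (jj m))) -mulgA mulVg mulg1.
Qed.

Lemma a_map_functional s jj y1 y2 : a_map s jj y1 -> a_map s jj y2 -> y1 = y2.
Proof.
have e_notin_V c i : c *: e i != 0 -> ~ V (c *: e i).
  move=> /eqP nz Vce; apply: nz; apply: VW_disjoint Vce _.
  apply/W_spanE; apply: subspaceZ; first exact: span_of_subspace.
  by apply: span_of_gen; exists i.
move=> [[z [bz nz]] sub1] [_ sub2]; have := sub1 z bz; have := sub2 z bz.
case: y1 {sub1} => [r1|]; case: y2 {sub2} => [r2|] //.
- move=> [c2 E2] [c1 E1]; congr Some; apply: (scale_e_inj (c1 := c1) (c2 := c2)).
    by rewrite -E1 -E2.
  by rewrite -E1; apply/eqP.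
- by move=> Vz [c E]; move: nz Vz; rewrite E => /eqP/e_notin_V.
- by move=> [c E]; move: nz; rewrite E => /eqP/e_notin_V.
Qed.

Lemma a_map1_basis (t : 'I_n -> I) y :
  (match y with Some r => line (e r) | None => V end) (br (fun m => e (t m))) ->
  br (fun m => e (t m)) <> 0 -> a_map 1%g (fun m => Some (t m)) y.
Proof.
have brE z : (exists x : 'I_n -> L, (forall r, x r = e (t r)) /\
    z = br (fun m => x ((1 : {perm 'I_n})%g m))) -> z = br (fun m => e (t m)).
  by move=> [x [xE ->]]; congr br; apply: funext => m; rewrite perm1.
move=> bry nz; split.
  exists (br (fun m => e (t m))); split=> //; apply: span_of_gen.
  by exists (fun m => e (t m)); split=> //; congr br; apply: funext => m; rewrite perm1.
apply: span_of_min => [|z /brE -> //].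
by case: y bry => [r|] _; [apply: line_subspace | apply: V_subspace].
Qed.

Definition linked (p q : I) : Prop :=
  exists b (X : ('I_n.-1 -> option I) * bool), mu br V e (Some p, b) X (Some q).

Lemma phi_iter_linked Xs J p : phi_iter br V e J Xs p ->
  exists2 q, J q & clos_refl_trans _ linked q.1 p.1.
Proof.
elim: Xs J => [|X Xs IH] J /=; first by exists p => //; apply: rt_refl.
move=> /IH [q [j [Jj jq]] qp]; exists j => //.
by apply: rt_trans qp; apply: rt_step; exists j.2, X.
Qed.

Lemma connected_linked_rt i j : connected i j -> clos_refl_trans _ linked i j.
Proof.
case=> [->|[b [Xs [_ [_ /phi_iter_linked [q -> //]]]]]].
exact: rt_refl.
Qed.

Lemma phi_iter_flag J Xs p b1 b2 : (0 < size Xs)%N ->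
  phi_iter br V e J Xs (p, b1) -> phi_iter br V e J Xs (p, b2).
Proof. by case/lastP: Xs => [|Xs X] // _; rewrite /phi_iter foldl_rcons. Qed.

Lemma connected_linked_trans i k j : connected i k -> linked k j -> connected i j.
Proof.
move=> ik [b' [X' kj]]; right.
case: ik => [->|[b [Xs [Xs_gt0 [nonempty ik]]]]].
  by exists b', [:: X']; split=> //; split=> [[|[|]] //|]; exists (k, b').
exists b, (rcons Xs X'); rewrite size_rcons; split=> //; split.
  move=> m /andP[m_gt0]; rewrite ltnS leq_eqVlt => /orP[/eqP->|mXs].
    by exists (k, false); rewrite -cats1 takel_cat // take_size.
  by rewrite -cats1 takel_cat ?(ltnW mXs) //; apply: nonempty; rewrite m_gt0 mXs.
by rewrite /phi_iter foldl_rcons; exists (k, b'); split=> //; apply: (phi_iter_flag (b1 := false)).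
Qed.

Lemma linked_rt_connected i j : clos_refl_trans _ linked i j -> connected i j.
Proof.
move/clos_rt_rtn1_iff; elim=> [|y z yz _ IH]; first by left.
exact: connected_linked_trans IH yz.
Qed.

Lemma linked_connected i j : linked i j -> connected i j.
Proof. by move=> ij; apply/linked_rt_connected/rt_step. Qed.

Definition swap01 : {perm 'I_n} := tperm ord0 (lift ord0 ord0).

Lemma tcons_swap01 (T : Type) (a b : T) (f : 'I_n' -> T) m :
  tcons (m := n) b (tcons (m := n'.+1) a f) m =
  tcons (m := n) a (tcons (m := n'.+1) b f) (swap01 m).
Proof.
case: (unliftP ord0 m) => [m1 ->|->]; last by rewrite tpermL tconsS !tcons0.
case: (unliftP ord0 m1) => [m2 ->|->]; last by rewrite tpermR tconsS !tcons0.
by rewrite tpermD ?neq_lift ?(inj_eq lift_inj) ?neq_lift // !tconsS.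
Qed.

Lemma linked_sym p q : linked p q -> linked q p.
Proof.
(* Swapping the two distinguished arguments maps the case (barred, plain) of mu to
   itself and exchanges the cases (plain, barred) and (plain, plain); the latter
   direction uses that a_sigma is a partial function. *)
move=> [b [[X bX] pq]]; case: b pq; case: bX => //= pq.
- case: pq => k [s pq]; exists true, (X, false), k, (s * swap01^-1)%g => y.
  by rewrite (a_map_perm s y (tcons_swap01 (Some q) (Some p) _)); apply: pq.
- by case: pq => s pq; exists false, (X, false), s; apply/pq.
- case: pq => s pq; exists false, (X, true), s => y; split=> [|->] //.
  by move/a_map_functional; apply.
Qed.

Lemma connected_refl i : connected i i.
Proof. by left. Qed.

Lemma connected_sym i j : connected i j -> connected j i.
Proof.
move/connected_linked_rt => ij; apply: linked_rt_connected.
elim: ij => [x y /linked_sym|x|x y z _ yx _ zy].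
- exact: rt_step.
- exact: rt_refl.
- exact: rt_trans zy yx.
Qed.

Lemma connected_trans i j k : connected i j -> connected j k -> connected i k.
Proof.
move=> /connected_linked_rt ij /connected_linked_rt jk.
by apply: linked_rt_connected; apply: rt_trans ij jk.
Qed.

Lemma cls_eq i j : connected i j -> cls i = cls j.
Proof.
move=> ij; apply: funext => k; apply: propext.
by split; [apply: connected_trans (connected_sym ij) | apply: connected_trans ij].
Qed.

Lemma a_map_line_linked s (t : 'I_n -> I) r a :
  a_map s (fun m => Some (t m)) (Some r) -> linked (t a) r.
Proof.
move=> str; pose tau := tperm ord0 a.
exists false, ((fun q => Some (t (tau (lift ord0 q)))), false), (s * tau^-1)%g.
rewrite (a_map_perm s _ (jj := fun m => Some (t m))) // => m.
by rewrite -(tcons_eta (fun m => Some (t (tau m)))) /tau tpermL.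
Qed.

Lemma perm_to_pair (a b : 'I_n) : a != b ->
  exists tau : {perm 'I_n}, tau ord0 = a /\ tau (lift ord0 ord0) = b.
Proof.
move=> ab; pose c := tperm ord0 a b.
have c0 : c != ord0.
  by apply: contra_neq ab => c0; rewrite -(tpermK ord0 a b) -/c c0 tpermL.
exists (tperm (lift ord0 ord0) c * tperm ord0 a)%g; rewrite !permM tpermL /c tpermK.
by rewrite (@tpermD _ (lift ord0 ord0) c ord0) ?tpermL // eq_sym neq_lift.
Qed.

Lemma a_map_V_linked s (t : 'I_n -> I) a b :
  a_map s (fun m => Some (t m)) None -> a != b -> linked (t b) (t a).
Proof.
(* mu(bar t_b, (v, t_c, ...)) = b_sigma(v, bar t_b, bar t_c, ...) contains t_a, since
   (t_a, t_b, t_c, ...) is t up to a permutation. *)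
move=> stV /perm_to_pair[tau [tau0 tau1]].
pose X := tcons (m := n'.+1) None (fun q => Some (t (tau (lift ord0 (lift ord0 q))))).
exists true, (X, false), ord0, (s * tau^-1)%g => y.
rewrite (a_map_perm s y (jj := fun m => Some (t m))).
  by split=> [/a_map_functional/(_ stV)|->].
move=> m; case: (unliftP ord0 m) => [m1 ->|->]; last by rewrite tcons0 tau0.
rewrite tconsS; case: (unliftP ord0 m1) => [m2 ->|->]; last by rewrite tcons0 tau1.
by rewrite tconsS /X tconsS.
Qed.

Lemma br_basis_connected (t : 'I_n -> I) a b :
  br (fun m => e (t m)) <> 0 -> connected (t a) (t b).
Proof.
move=> nz; have [[j tj]|tV] := br_basis_line_or_V t.
  have stj := a_map1_basis (y := Some j) tj nz.
  apply: connected_trans (linked_connected (a_map_line_linked a stj)) _.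
  exact/connected_sym/linked_connected/(a_map_line_linked b stj).
have stV := a_map1_basis (y := None) tV nz.
have [->|ab] := eqVneq a b; first exact: connected_refl.
exact/connected_sym/linked_connected/(a_map_V_linked stV ab).
Qed.

Definition basis_term (k : I) (x : L) : Prop := exists t, x = e t /\ connected k t.

Definition bracket_term (k : I) (x : L) : Prop :=
  exists t : 'I_n -> I, x = br (fun m => e (t m)) /\ forall m, connected k (t m).

Definition class_term (k : I) (x : L) : Prop := basis_term k x \/ bracket_term k x.

Lemma br_basis_terms_eq0 (z : 'I_n -> L) (K : 'I_n -> I) :
  (forall r, basis_term (K r) (z r)) -> (exists a b, ~ connected (K a) (K b)) -> br z = 0.
Proof.
move=> /choice[t zt] [a [b Kab]].
have -> : z = (fun m => e (t m)) by apply: funext => m; case: (zt m).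
apply: contrapT => /(br_basis_connected a b) tab; apply: Kab.
apply: connected_trans (proj2 (zt a)) _; apply: connected_trans tab _.
exact: connected_sym (proj2 (zt b)).
Qed.

Lemma span_e_sum_of_lines (P : I -> Prop) x :
  span_of (fun z => exists j, P j /\ z = e j) x -> sum_of P (fun j => line (e j)) x.
Proof.
apply: sum_of_span => [j _|_ [j [Pj ->]]]; first exact: line_subspace.
by exists j => //; exists 1; rewrite scale1r.
Qed.

Lemma W_cls_independent (s : seq (I -> Prop)) (w : (I -> Prop) -> L) :
  uniq s -> (forall C, C \in s -> (exists k, C = cls k) /\ W_cls e C (w C)) ->
  \sum_(C <- s) w C = 0 -> forall C, C \in s -> w C = 0.
Proof.
move=> Us ws sum0 C Cs; have [[k Ck] wC] := ws C Cs.
apply: (sum_of_disjoint_eq0 (P := C) (fun j => line_subspace (e j)) e_lines_independent).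
  exact: span_e_sum_of_lines.
have -> : w C = - \sum_(C' <- s | C' != C) w C'.
  by apply/eqP; rewrite -addr_eq0 -(bigD1_seq C) //= sum0.
apply/span_e_sum_of_lines/(subspaceN (span_of_subspace _)).
rewrite -big_filter; apply: (subspace_sum (span_of_subspace _)) => C' /InP.
rewrite mem_filter => /andP[C'C C's]; have [[k' C'k'] wC'] := ws C' C's.
apply: span_of_mono wC' => _ [j [C'j ->]]; exists j; split=> // Cj.
move/eqP: C'C; apply; rewrite Ck C'k' in Cj C'j *.
exact/cls_eq/(connected_trans C'j (connected_sym Cj)).
Qed.

Lemma J_cls_subspace C : subspace (J_cls br V e C).
Proof.
split.
  exists 0, 0; rewrite addr0; split; last by split=> //; apply: span_of0.
  by split; [apply: subspace0 | apply: span_of0].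
move=> a _ _ [v1 [w1 [[Vv1 v1C] [w1C ->]]]] [v2 [w2 [[Vv2 v2C] [w2C ->]]]].
exists (a *: v1 + v2), (a *: w1 + w2); rewrite scalerDr addrACA.
by split; [split; [case: V_subspace => _; apply | apply: span_ofDZ] | split=> //; apply: span_ofDZ].
Qed.

Section Tight.
Variables (i1 : I) (rest : 'I_n.-1 -> I).
Hypothesis mu_v :
  forall y, mu br V e (Some i1, false) (fun q => Some (rest q), false) y <-> y = None.

Let t := tcons (m := n) i1 rest.

Lemma tight_generator_connected m : connected i1 (t m).
Proof.
have [s] : exists s, a_map s (tcons (Some i1) (fun q => Some (rest q))) None by apply/mu_v.
rewrite tcons_comp => stV; case: (unliftP ord0 m) => [q ->|->]; last exact: connected_refl.
apply/linked_connected/(a_map_V_linked (a := lift ord0 q) (b := ord0) stV).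
by rewrite eq_sym neq_lift.
Qed.

Lemma tight_generator_in_V : V (br (fun m => e (t m))).
Proof.
have [[j tj]|] := br_basis_line_or_V t => //.
have [->|nz] := pselect (br (fun m => e (t m)) = 0); first exact: subspace0.
suff : Some j = None by [].
by apply/mu_v; exists 1%g; rewrite tcons_comp; apply: (a_map1_basis (y := Some j)).
Qed.

End Tight.

Hypothesis V_tight : tight br V e.
Hypothesis L_eq_V_plus_W : forall x, exists v w, V v /\ W w /\ x = v + w.

Definition V_generator (z : L) : Prop := exists t : 'I_n -> I,
  z = br (fun m => e (t m)) /\ V z /\ forall m, connected (t ord0) (t m).

Lemma span_generators x : span_of (fun z => (exists i, z = e i) \/ V_generator z) x.
Proof.
have [v [w [Vv [/W_spanE Ww ->]]]] := L_eq_V_plus_W x.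
apply: subspaceD; first exact: span_of_subspace.
  case: V_tight => [V0|VE]; first by rewrite (V0 v Vv); apply: span_of0.
  move/VE: Vv; apply: span_of_mono => _ [i1 [rest [mu_v ->]]]; right.
  exists (tcons (m := n) i1 rest); rewrite tcons_comp; split=> //.
  by split; [apply: tight_generator_in_V | apply: tight_generator_connected].
by apply: span_of_mono Ww => z zi; left.
Qed.

Lemma J_cls_sum_of x : sum_of (fun C => exists i, C = cls i) (J_cls br V e) x.
Proof.
apply: sum_of_span (fun C _ => J_cls_subspace C) _ x (span_generators x).
move=> _ [[i ->]|[t [-> [Vt tc]]]].
  exists (cls i); first by exists i.
  exists 0, (e i); rewrite add0r; split; first by split; [apply: subspace0 | apply: span_of0].
  by split=> //; apply: span_of_gen; exists i; split=> //; apply: connected_refl.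
exists (cls (t ord0)); first by exists (t ord0).
exists (br (fun m => e (t m))), 0; rewrite addr0; split; last by split=> //; apply: span_of0.
by split=> //; apply: span_of_gen; exists t.
Qed.

Variables (G : zmodType) (eps : G -> G -> F) (Lg : G -> L -> Prop)
  (alpha : {perm 'I_n} -> {perm 'I_n.-1} -> 'I_n -> 'I_n -> 'I_n -> F).
Hypothesis br_color_gLt : color_gLt eps Lg br alpha.
Hypothesis br_graded : forall (g : 'I_n -> G) (x : 'I_n -> L),
  (forall r, Lg (g r) (x r)) -> Lg (\sum_(r < n) g r) (br x).
Hypothesis e_homogeneous : forall i, exists g, Lg g (e i).

Lemma br_basis_homogeneous (t : 'I_n -> I) : exists g, Lg g (br (fun m => e (t m))).
Proof.
have [deg e_deg] := choice e_homogeneous.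
by exists (\sum_(r < n) deg (t r)); apply: br_graded => r; apply: e_deg.
Qed.

Lemma nested_br_eq0 (r0 : 'I_n) (t0 : 'I_n -> I) (y : 'I_n.-1 -> L) :
  (forall q, exists g, Lg g (y q)) ->
  (forall i j (s1 : {perm 'I_n}) (s2 : {perm 'I_n.-1}),
     br (ins j (e (t0 (s1 i))) (fun q => y (s2 q))) = 0) ->
  br (ins r0 (br (fun m => e (t0 m))) y) = 0.
Proof.
move=> y_hom inner0; have [deg e_deg] := choice e_homogeneous.
have [h y_deg] := choice y_hom.
rewrite (br_color_gLt r0 (g := fun m => deg (t0 m)) (h := h)) //.
apply: big1 => i _; apply: big1 => j _; apply: big1 => s1 _; apply: big1 => s2 _.
by rewrite inner0 -/(set_arg (fun m => e (t0 (s1 m))) i 0) br_set_arg0 scaler0.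
Qed.

Lemma br_terms_eq0 N (z : 'I_n -> L) (K : 'I_n -> I) (D : {set 'I_n}) :
  (#|D| <= N)%N ->
  (forall r, r \notin D -> basis_term (K r) (z r)) ->
  (forall r, r \in D -> bracket_term (K r) (z r)) ->
  (exists a b, ~ connected (K a) (K b)) -> br z = 0.
Proof.
elim: N z K D => [|N IH] z K D.
  rewrite leqn0 => /eqP/cards0_eq-> zbasis _; apply: br_basis_terms_eq0 => r.
  by apply: zbasis; rewrite in_set0.
move=> DN zbasis zbr Kab.
have [D0|[r0 r0D]] := set_0Vmem D.
  by apply: br_basis_terms_eq0 Kab => r; apply: zbasis; rewrite D0 in_set0.
have [t0 [zr0 t0K]] := zbr r0 r0D.
have z_hom r : exists g, Lg g (z r).
  have [rD|rD] := boolP (r \in D).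
    by have [t [-> _]] := zbr r rD; apply: br_basis_homogeneous.
  by have [t [-> _]] := zbasis r rD; apply: e_homogeneous.
rewrite -(ins_eta r0 z) zr0; apply: nested_br_eq0 => [q|i j s1 s2]; first exact: z_hom.
(* [src m] is the position in [z] from which the m-th argument of the inner bracket
   comes; it is a bijection, so the inner bracket still mixes two classes. *)
pose src := ins j r0 (fun q => lift r0 (s2 q)).
have src_inj : injective src.
  by apply: ins_inj => [q1 q2 /lift_inj/perm_inj|q] //; rewrite eq_sym neq_lift.
apply: (IH _ (fun m => K (src m)) (src @^-1: (D :\ r0))).
- rewrite card_preimset //; move: DN; rewrite (cardsD1 r0 D) r0D add1n ltnS.
  exact.
- move=> m; rewrite inE; case: (unliftP j m) => [q ->|->]; rewrite /src ?ins_lift ?ins_at.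
    by rewrite in_setD1 eq_sym neq_lift => /zbasis.
  by exists (t0 (s1 i)).
- move=> m; rewrite inE in_setD1 => /andP[mr0 mD].
  case: (unliftP j m) mr0 mD => [q ->|->]; rewrite /src ?ins_lift ?ins_at ?eqxx //.
  by move=> _ /zbr.
- have [g _ src_g] := injF_bij src_inj.
  by case: Kab => a [b Kab]; exists (g a), (g b); rewrite !src_g.
Qed.

Lemma br_class_terms_eq0 (z : 'I_n -> L) (K : 'I_n -> I) :
  (forall r, class_term (K r) (z r)) -> (exists a b, ~ connected (K a) (K b)) -> br z = 0.
Proof.
move=> zK; apply: (@br_terms_eq0 _ _ _ [set r | ~~ `[< basis_term (K r) (z r) >]]) => // r.
  by rewrite inE negbK => /asboolP.
by rewrite inE => /asboolPn; case: (zK r).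
Qed.

Definition class_bracket (C : I -> Prop) (z : L) : Prop :=
  exists t : 'I_n -> I, (forall r, C (t r)) /\ z = br (fun m => e (t m)).

Lemma br_class_mismatch_eq0 k p (z : 'I_n -> L) (K : 'I_n -> I) r :
  r != p -> ~ connected k (K r) -> (forall r, r != p -> class_term (K r) (z r)) ->
  span_of (class_bracket (cls k)) (z p) -> br z = 0.
Proof.
move=> rp kKr zK zp; rewrite -(set_arg_id z p).
apply: span_of_min (br_kernel_subspace z p) _ _ zp => _ [t [tk ->]].
apply: (br_class_terms_eq0 (K := fun m => if m == p then k else K m)).
  move=> m; rewrite /set_arg; case: eqP => [_|/eqP mp]; last exact: zK.
  by right; exists t.
by exists p, r; rewrite eqxx (negbTE rp).
Qed.

Lemma V_cls_central (s : seq (I -> Prop)) (v : (I -> Prop) -> L) C p (z : 'I_n -> L) :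
  uniq s -> (forall C, C \in s -> (exists k, C = cls k) /\ span_of (class_bracket C) (v C)) ->
  \sum_(C <- s) v C = 0 -> C \in s -> z p = v C -> br z = 0.
Proof.
move=> Us vs sum0 Cs; move: z.
apply: (br_eq0_span_args (P := fun x => exists k, class_term k x) (A := fun u => u = v C)).
  move=> x; apply: span_of_mono (span_generators x) => _ [[i ->]|[t [-> [_ tc]]]].
    by exists i; left; exists i; split=> //; apply: connected_refl.
  by exists (t ord0); right; exists t.
move=> z zp zclass; have [[k Ck] vC] := vs C Cs.
have [K zK] : exists K : 'I_n -> I, forall r, r != p -> class_term (K r) (z r).
  have /choice[K KP] : forall r, exists k', r != p -> class_term k' (z r).
    move=> r; have [/zclass[k' zk']|rp] := pselect (r != p); first by exists k'.
    by exists k => /rp.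
  by exists K.
(* Either another argument lies outside the class of C, or all do and v C can be
   replaced by minus the sum of the other v C', which lie in other classes. *)
have [[r [rp kKr]]|allk] := pselect (exists r, r != p /\ ~ connected k (K r)).
  by apply: (br_class_mismatch_eq0 rp kKr zK); rewrite zp -Ck.
have kK r : r != p -> connected k (K r).
  by move=> rp; apply: contrapT => kKr; apply: allk; exists r.
have vCE : v C = - \sum_(C' <- s | C' != C) v C'.
  by apply/eqP; rewrite -addr_eq0 -(bigD1_seq C) //= sum0.
rewrite -(set_arg_id z p) zp vCE; apply: (subspaceN (br_kernel_subspace z p)).
rewrite -big_filter; apply: (subspace_sum (br_kernel_subspace z p)) => C' /InP.
rewrite mem_filter => /andP[C'C C's]; have [[k' C'k'] vC'] := vs C' C's.
have pp' : lift p ord0 != p by rewrite eq_sym neq_lift.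
apply: (br_class_mismatch_eq0 (k := k') pp').
- move=> k'K; move/eqP: C'C; apply; rewrite Ck C'k'; apply: cls_eq.
  exact: connected_trans k'K (connected_sym (kK _ pp')).
- by move=> r rp; rewrite /set_arg (negbTE rp); apply: zK.
- by rewrite /set_arg eqxx -C'k'.
Qed.

Hypothesis br_centerless : centerless br.

Lemma V_cls_independent (s : seq (I -> Prop)) (v : (I -> Prop) -> L) :
  uniq s -> (forall C, C \in s -> (exists k, C = cls k) /\ V_cls br V e C (v C)) ->
  \sum_(C <- s) v C = 0 -> forall C, C \in s -> v C = 0.
Proof.
move=> Us vs sum0 C Cs; apply: br_centerless => sg.
have zero_subspace : subspace (fun z : L => z = 0).
  by split=> // a _ _ -> ->; rewrite scaler0 addr0.
apply: span_of_min zero_subspace _ => _ [x [xs ->]].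
apply: (V_cls_central (p := (sg^-1)%g ord0) Us _ sum0 Cs); last by rewrite permKV; apply: (xs ord0).
by move=> C' /vs[? []].
Qed.

Lemma J_cls_independent : independent (fun C => exists i, C = cls i) (J_cls br V e).
Proof.
move=> s f /NoDupP Us fs sum0 C /InP Cs.
have /choice[vw vwP] : forall C, exists p : L * L, C \in s ->
    V_cls br V e C p.1 /\ W_cls e C p.2 /\ f C = p.1 + p.2.
  move=> C'; have [/InP C's|C's] := boolP (C' \in s); last by exists (0, 0).
  by have [_ [v [w [vC [wC ->]]]]] := fs C' C's; exists (v, w).
have sumE : \sum_(C <- s) f C = \sum_(C <- s) (vw C).1 + \sum_(C <- s) (vw C).2.
  by rewrite -big_split; apply: eq_big_seq => C' /vwP[_ [_ ->]].
have Vsum : V (\sum_(C <- s) (vw C).1).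
  by apply: subspace_sum => // C' /InP/vwP[[]].
have Wsum : W (- \sum_(C <- s) (vw C).2).
  apply/W_spanE/(subspaceN (span_of_subspace _))/(subspace_sum (span_of_subspace _)).
  by move=> C' /InP/vwP[_ [wC' _]]; apply: span_of_mono wC' => _ [j [_ ->]]; exists j.
have sumV0 : \sum_(C <- s) (vw C).1 = 0.
  by apply: VW_disjoint Vsum _; move/eqP: sum0; rewrite sumE addr_eq0 => /eqP ->.
have sumW0 : \sum_(C <- s) (vw C).2 = 0 by move: sum0; rewrite sumE sumV0 add0r.
have cls_s C' : C' \in s -> exists k, C' = cls k by move=> /InP/fs[].
have [_ [_ ->]] := vwP C Cs.
rewrite (V_cls_independent Us _ sumV0 Cs) ?(W_cls_independent Us _ sumW0 Cs) ?addr0 //.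
- by move=> C' C's; split; [apply: cls_s | have [_ []] := vwP C' C's].
- by move=> C' C's; split; [apply: cls_s | have [] := vwP C' C's].
Qed.

Lemma J_cls_direct_sum :
  is_direct_sum (fun _ : L => True) (fun C => exists i, C = cls i) (J_cls br V e).
Proof.
split; first by move=> C _; apply: J_cls_subspace.
by split; [move=> x; split=> // _; apply: J_cls_sum_of | apply: J_cls_independent].
Qed.

End QuasiMultiplicativeBasis.

Theorem corollary3p15 (F : fieldType) (G : zmodType) (L : lmodType F) (n : nat)
    (I : Type) (eps : G -> G -> F) (Lg : G -> L -> Prop) (br : ('I_n -> L) -> L)
    (alpha : {perm 'I_n} -> {perm 'I_n.-1} -> 'I_n -> 'I_n -> 'I_n -> F)
    (V W : L -> Prop) (e : I -> L) :
  (2 <= n)%N ->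
  bicharacter eps ->
  graded_nary_algebra Lg br ->
  color_gLt eps Lg br alpha ->
  quasi_multiplicative_basis Lg br V W e ->
  centerless br ->
  tight br V e ->
  is_direct_sum (fun _ : L => True) (fun C : I -> Prop => exists i, C = cls br V e i)
    (J_cls br V e).
Proof.
case: n br alpha => [|[|n']] br alpha // _ _ [_ [br_multilinear br_graded]] gLt qmb.
move=> centerless tight.
have [[V_subspace _] [_ [VW_disjoint [L_eq_V_plus_W qmb']]]] := qmb.
have [_ [W_spanE [e_free [e_hom [br_basis _]]]]] := qmb'.
exact: (J_cls_direct_sum br_multilinear V_subspace W_spanE e_free VW_disjoint br_basis
  tight L_eq_V_plus_W gLt br_graded e_hom centerless).
Qed.
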